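(* Let $G_1,G_2,\dots$ be 3-symmetric graphs with $|G_i|\to\infty$, and let $H$ be a 3-symmetric graph with at least one vertex. Then as $i\to\infty$, \[t(K_3,\mathrm{Inflate}(G_i,H))\to\tfrac18,\quad t(P_3,\mathrm{Inflate}(G_i,H))\to\tfrac38,\quad t(K_2\cup K_1,\mathrm{Inflate}(G_i,H))\to\tfrac38,\quad t(\overline{K_3},\mathrm{Inflate}(G_i,H))\to\tfrac18.\]
   Context: All graphs are finite and simple; $|G|$ denotes the number of vertices. For a graph $G$ on $n$ vertices and a graph $F$ on $k$ vertices, the density $t(F,G)$ is the number of $k$-element subsets $S\subseteq V(G)$ whose induced subgraph is isomorphic to $F$, divided by $\binom{n}{k}$ (and $0$ if $n<k$). $K_3$ is the triangle, $P_3$ the path with 3 vertices and 2 edges, $K_2\cup K_1$ the 3-vertex graph with exactly one edge, and $\overline{K_3}$ the 3-vertex graph with no edges. A graph with at least 3 vertices is 3-symmetric if its densities of $K_3,P_3,K_2\cup K_1,\overline{K_3}$ are $1/8,3/8,3/8,1/8$ respectively; graphs with fewer than 3 vertices are considered trivially 3-symmetric. The inflation $\mathrm{Inflate}(G,H)$ (lexicographic product) is the graph with vertex set $V(G)\times V(H)$ in which $(g,h)$ and $(g',h')$ are adjacent iff either $g$ and $g'$ are adjacent in $G$, or $g=g'$ and $h,h'$ are adjacent in $H$. *)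

From HB Require Import structures.
From mathcomp Require Import all_boot all_order all_algebra.
Set Implicit Arguments. Unset Strict Implicit. Unset Printing Implicit Defensive.
Import Order.TTheory GRing.Theory Num.Theory.

Record graph := Graph {
  V : finType;
  adj : rel V;
  adj_sym : symmetric adj;
  adj_irr : irreflexive adj }.

Definition gorder (G : graph) : nat := #|V G|.

Definition induced_iso (F G : graph) (S : {set V G}) : bool :=
  [exists f : {ffun V F -> V G},
     [&& injectiveb f, (f @: setT) == S &
         [forall a, forall b, adj a b == adj (f a) (f b)]]].

Definition density (F G : graph) : rat :=
  if (gorder G < gorder F)%N then 0%R else
  ((#|[set S : {set V G} | (#|S| == gorder F) && induced_iso F S]|)%:R
     / ('C(gorder G, gorder F))%:R)%R.

Definition e_K3 : rel 'I_3 := fun a b => a != b.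
Definition e_P3 : rel 'I_3 := fun a b =>
  ((val a == 0) && (val b == 1)) || ((val a == 1) && (val b == 0)) ||
  ((val a == 1) && (val b == 2)) || ((val a == 2) && (val b == 1)).
Definition e_K2K1 : rel 'I_3 := fun a b =>
  ((val a == 0) && (val b == 1)) || ((val a == 1) && (val b == 0)).
Definition e_E3 : rel 'I_3 := fun _ _ => false.

Lemma e_K3_sym : symmetric e_K3. Proof. by move=> a b; rewrite /e_K3 eq_sym. Qed.
Lemma e_K3_irr : irreflexive e_K3. Proof. by move=> a; rewrite /e_K3 eqxx. Qed.
Lemma e_P3_sym : symmetric e_P3.
Proof. by move=> a b; rewrite /e_P3; case: (val a == 0); case: (val a == 1); case: (val a == 2);
  case: (val b == 0); case: (val b == 1); case: (val b == 2). Qed.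
Lemma e_P3_irr : irreflexive e_P3.
Proof. by move=> a; rewrite /e_P3; case: (val a == 0) /eqP => [->|] //;
  case: (val a == 1) /eqP => [->|] //; case: (val a == 2) /eqP => [->|] //; rewrite !andbF. Qed.
Lemma e_K2K1_sym : symmetric e_K2K1.
Proof. by move=> a b; rewrite /e_K2K1; case: (val a == 0); case: (val a == 1);
  case: (val b == 0); case: (val b == 1). Qed.
Lemma e_K2K1_irr : irreflexive e_K2K1.
Proof. by move=> a; rewrite /e_K2K1; case: (val a == 0) /eqP => [->|] //;
  case: (val a == 1) /eqP => [->|] //; rewrite !andbF. Qed.
Lemma e_E3_sym : symmetric e_E3. Proof. by []. Qed.
Lemma e_E3_irr : irreflexive e_E3. Proof. by []. Qed.

Definition K3 : graph := Graph e_K3_sym e_K3_irr.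
Definition P3 : graph := Graph e_P3_sym e_P3_irr.
Definition K2K1 : graph := Graph e_K2K1_sym e_K2K1_irr.
Definition E3 : graph := Graph e_E3_sym e_E3_irr.

Definition three_symmetric (G : graph) : Prop :=
  (3 <= gorder G)%N ->
  [/\ density K3 G = (1/8)%R, density P3 G = (3/8)%R,
      density K2K1 G = (3/8)%R & density E3 G = (1/8)%R].

Definition inflate_adj (G H : graph) : rel (V G * V H) :=
  fun x y => adj x.1 y.1 || ((x.1 == y.1) && adj x.2 y.2).

Lemma inflate_sym G H : symmetric (@inflate_adj G H).
Proof. by move=> x y; rewrite /inflate_adj adj_sym eq_sym (adj_sym _ x.2). Qed.
Lemma inflate_irr G H : irreflexive (@inflate_adj G H).
Proof. by move=> x; rewrite /inflate_adj !adj_irr andbF. Qed.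

Definition Inflate (G H : graph) : graph := Graph (@inflate_sym G H) (@inflate_irr G H).

Definition converges_to (u : nat -> rat) (l : rat) : Prop :=
  forall eps : rat, (0 < eps)%R ->
    exists N : nat, forall i : nat, (N <= i)%N -> (`|u i - l| < eps)%R.

From mathcomp Require Import all_boot all_order all_algebra.
From mathcomp Require Import ring lra.
Import Order.TTheory GRing.Theory Num.Theory.
Set Implicit Arguments. Unset Strict Implicit. Unset Printing Implicit Defensive.

(* Call a 3-set of vertices of Inflate(G,H) transversal when its three vertices
   lie in distinct blobs {g} x V(H).  A transversal triple induces the same graph
   as its projection to G, and every 3-set of G is the projection of exactly
   |H|^3 transversal triples; hence the F-density of Inflate(G,H) differs from
   that of G by at most the proportion of non-transversal triples, which is
   O(1/|G|). *)

Definition copies (F X : graph) : {set {set V X}} :=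
  [set S : {set V X} | (#|S| == gorder F) && induced_iso F S].

Lemma card_copies_le (F X : graph) : #|copies F X| <= 'C(gorder X, gorder F).
Proof.
rewrite -card_draws; apply: subset_leq_card.
by apply/subsetP => S; rewrite !inE => /andP[].
Qed.

Lemma densityE (F X : graph) : gorder F <= gorder X ->
  density F X = (#|copies F X|%:R / 'C(gorder X, gorder F)%:R)%R.
Proof. by rewrite /density ltnNge => ->. Qed.

Lemma induced_iso_imset (F X Y : graph) (phi : V X -> V Y) (S : {set V X}) :
  {in S &, injective phi} ->
  {in S &, forall x y, adj x y = adj (phi x) (phi y)} ->
  induced_iso F (phi @: S) = induced_iso F S.
Proof.
move=> phi_inj phi_adj; apply/idP/idP.
- case/existsP => g /and3P[/injectiveP g_inj /eqP g_im /forallP g_adj].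
  have g_pre a : exists x, (x \in S) && (phi x == g a).
    have /imsetP[x xS ->] : g a \in phi @: S by rewrite -g_im imset_f.
    by exists x; rewrite xS eqxx.
  pose f := [ffun a => xchoose (g_pre a)].
  have [fS phi_f] : (forall a, f a \in S) /\ (forall a, phi (f a) = g a).
    by split=> a; rewrite ffunE; case/andP: (xchooseP (g_pre a)) => // _ /eqP.
  apply/existsP; exists f; apply/and3P; split.
  + by apply/injectiveP => a b fab; apply: g_inj; rewrite -!phi_f fab.
  + rewrite eqEsubset; apply/andP; split; apply/subsetP => x.
      by case/imsetP => a _ ->.
    move=> xS; have /imsetP[a _ gax] : phi x \in g @: setT by rewrite g_im imset_f.
    by apply/imsetP; exists a => //; apply: phi_inj; rewrite ?phi_f.
  + apply/forallP => a; apply/forallP => b.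
    by rewrite phi_adj // !phi_f; move/forallP: (g_adj a) => /(_ b).
- case/existsP => f /and3P[/injectiveP f_inj /eqP f_im /forallP f_adj].
  have fS a : f a \in S by rewrite -f_im imset_f.
  apply/existsP; exists [ffun a => phi (f a)]; apply/and3P; split.
  + by apply/injectiveP => a b; rewrite !ffunE => /phi_inj /f_inj; apply.
  + by rewrite -f_im -imset_comp; apply/eqP/eq_imset => a; rewrite ffunE.
  + apply/forallP => a; apply/forallP => b; rewrite !ffunE -phi_adj //.
    by move/forallP: (f_adj a) => /(_ b).
Qed.

Section Inflation.
Variables G H : graph.
Local Notation VI := (V G * V H)%type.

Definition shadow (S : {set VI}) : {set V G} := [set x.1 | x in S].

Definition graphs_over (T : {set V G}) : {set {set VI}} :=
  [set S : {set VI} | (#|shadow S| == #|S|) && (shadow S == T)].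

Lemma card_graphs_over (T : {set V G}) : #|graphs_over T| = #|V H| ^ #|T|.
Proof.
pose gr (f : {ffun {x | x \in T} -> V H}) : {set VI} :=
  [set (val x, f x) | x : {x | x \in T}].
have gr_inj : injective gr.
  move=> f g fg; apply/ffunP => x.
  by have /imsetP[y _ [/val_inj <-]] : (val x, f x) \in gr g by rewrite -fg imset_f.
have shadow_gr f : shadow (gr f) = T.
  apply/setP => t; apply/imsetP/idP => [[_ /imsetP[x _ ->] ->] | tT] /=.
    exact: valP.
  by exists (val (exist _ t tT), f (exist _ t tT)); rewrite ?imset_f.
have -> : graphs_over T = gr @: setT.
  apply/setP => S; rewrite inE.
  apply/andP/imsetP => [[/imset_injP S_inj /eqP S_T] | [f _ ->]].
    have pre (x : {x | x \in T}) : exists y, (val x, y) \in S.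
      have /imsetP[[t y] tS /= ->] : val x \in shadow S by rewrite S_T (valP x).
      by exists y.
    exists [ffun x => xchoose (pre x)] => //.
    apply/setP => z; apply/idP/imsetP => [zS | [x _ ->]].
      have zT : z.1 \in T by rewrite -S_T imset_f.
      exists (exist _ z.1 zT) => //; rewrite ffunE.
      by apply: S_inj; rewrite ?(xchooseP (pre _)).
    by rewrite ffunE (xchooseP (pre x)).
  split; last by rewrite shadow_gr.
  apply/imset_injP => _ _ /imsetP[x _ ->] /imsetP[y _ ->] /= /val_inj -> //.
by rewrite card_imset // cardsT card_ffun card_sig.
Qed.

Definition transversals (k : nat) : {set {set VI}} :=
  [set S : {set VI} | (#|S| == k) && (#|shadow S| == k)].

Lemma transversals_sub_draws (k : nat) :
  transversals k \subset [set S : {set VI} | #|S| == k].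
Proof. by apply/subsetP => S; rewrite !inE => /andP[]. Qed.

Lemma card_transversals_le (k : nat) :
  #|transversals k| <= 'C(#|V G| * #|V H|, k).
Proof. by rewrite -card_prod -card_draws subset_leq_card ?transversals_sub_draws. Qed.

Lemma transversals_inj (k : nat) (S : {set VI}) :
  S \in transversals k -> {in S &, injective (@fst _ _)}.
Proof. by rewrite inE => /andP[/eqP Sk /eqP sSk]; apply/imset_injP; rewrite Sk sSk. Qed.

Lemma card_transversals_shadow (k : nat) (Q : {set {set V G}}) :
  {in Q, forall T : {set V G}, #|T| = k} ->
  #|[set S in transversals k | shadow S \in Q]| = #|Q| * #|V H| ^ k.
Proof.
move=> Qk; rewrite -sum1_card (partition_big shadow (mem Q)); last first.
  by move=> S; rewrite inE => /andP[].
rewrite -sum_nat_const; apply: eq_bigr => T QT.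
transitivity #|graphs_over T|; last by rewrite card_graphs_over Qk.
rewrite -sum1_card; apply: eq_bigl => S.
rewrite !inE; have [-> | _] := eqVneq (shadow S) T; last by rewrite !andbF.
have -> : T \in Q by [].
by rewrite Qk // eqxx !andbT eq_sym.
Qed.

Lemma card_transversals (k : nat) :
  #|transversals k| = 'C(#|V G|, k) * #|V H| ^ k.
Proof.
rewrite -card_draws -card_transversals_shadow; last by move=> T; rewrite inE => /eqP.
by apply: eq_card => S; rewrite !inE -andbA andbb.
Qed.

Lemma induced_iso_shadow (F : graph) (S : {set VI}) :
  {in S &, injective (@fst _ _)} ->
  @induced_iso F (Inflate G H) S = induced_iso F (shadow S).
Proof.
move=> S_inj; symmetry.
apply: (@induced_iso_imset F (Inflate G H) G fst) => // x y xS yS.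
rewrite /= /inflate_adj; case: (eqVneq x.1 y.1) => [/S_inj -> // | _].
  by rewrite !adj_irr.
by rewrite orbF.
Qed.

Variable F : graph.
Local Notation k := (gorder F).

Lemma card_copies_inflate_transversals :
  #|copies F (Inflate G H) :&: transversals k| = #|copies F G| * #|V H| ^ k.
Proof.
rewrite -card_transversals_shadow; last by move=> T; rewrite inE => /andP[/eqP].
apply: eq_card => S; rewrite [RHS]inE inE andbC.
have [ST | _] := boolP (S \in transversals k) => //=.
rewrite !inE induced_iso_shadow; last exact: transversals_inj ST.
by move: ST; rewrite inE => /andP[/eqP -> /eqP ->].
Qed.

Lemma copies_inflate_lower :
  #|copies F G| * #|V H| ^ k <= #|copies F (Inflate G H)|.
Proof. by rewrite -card_copies_inflate_transversals subset_leq_card ?subsetIl. Qed.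

Lemma copies_inflate_upper :
  #|copies F (Inflate G H)| <=
    #|copies F G| * #|V H| ^ k + ('C(#|V G| * #|V H|, k) - 'C(#|V G|, k) * #|V H| ^ k).
Proof.
rewrite -(cardsID (transversals k)) card_copies_inflate_transversals leq_add2l.
rewrite -card_transversals -card_prod -card_draws.
rewrite -[in X in _ - X](setIidPr (transversals_sub_draws k)) -cardsD.
rewrite subset_leq_card ?setSD //.
by apply/subsetP => S; rewrite !inE => /andP[].
Qed.
End Inflation.

Local Open Scope ring_scope.

Lemma natr_bin3 (R : comNzRingType) (m : nat) :
  'C(m, 3)%:R * 6 = m%:R * (m%:R - 1) * (m%:R - 2) :> R.
Proof.
case: m => [|[|[|m]]]; try by rewrite bin_small // mul0r -?natr1; ring.
have := bin_ffact m.+3 3; rewrite !ffactnS ffactn0 /= => bin_m.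
have -> : 6 = (3`!)%:R :> R by [].
by rewrite -natrM bin_m !natrM -!natr1; ring.
Qed.

(* The left factor 'C(nh,3) - 'C(n,3) h^3 counts the non-transversal triples of
   Inflate(G,H) when |G| = n and |H| = h. *)
Lemma bin3_mul_gap_le (R : realFieldType) (n h : nat) : (3 <= n)%N -> (0 < h)%N ->
  n%:R * ('C(n * h, 3)%:R - 'C(n, 3)%:R * h%:R ^+ 3) <= 18 * 'C(n * h, 3)%:R :> R.
Proof.
move=> n3 h1.
have N3 : 3 <= n%:R :> R by rewrite -[3]/(3%:R) ler_nat.
have H1 : 1 <= h%:R :> R by rewrite ler1n.
have nh := natr_bin3 R (n * h); have n6 := natr_bin3 R n.
rewrite natrM in nh.
set x := 'C(n * h, 3)%:R in nh *; set y := 'C(n, 3)%:R in n6 *.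
set N := n%:R in N3 nh n6 *; set hh := h%:R in H1 nh *.
have -> : x = N * hh * (N * hh - 1) * (N * hh - 2) / 6 by rewrite -nh mulfK ?pnatr_eq0.
have -> : y = N * (N - 1) * (N - 2) / 6 by rewrite -n6 mulfK ?pnatr_eq0.
set K := N * hh.
have K3 : 3 <= K by rewrite /K; nra.
have inner : 0 <= 15 * K ^+ 2 - 54 * K + 36 + 3 * N * K + 2 * N * hh ^+ 2 - 2 * N.
  have : 0 <= (K - 3) * (15 * K - 9) by apply: mulr_ge0; lra.
  have : 0 <= N * (3 * K - 2) by apply: mulr_ge0; lra.
  have : 0 <= N * hh ^+ 2 by apply: mulr_ge0; [lra | exact: sqr_ge0].
  nra.
rewrite -subr_ge0.
have -> : 18 * (K * (K - 1) * (K - 2) / 6) -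
    N * (K * (K - 1) * (K - 2) / 6 - N * (N - 1) * (N - 2) / 6 * hh ^+ 3) =
  K / 6 * (15 * K ^+ 2 - 54 * K + 36 + 3 * N * K + 2 * N * hh ^+ 2 - 2 * N).
  by rewrite /K; field.
by apply: mulr_ge0 => //; apply: divr_ge0; lra.
Qed.

Lemma dist_divr_le (R : realFieldType) (x a M t : R) :
  0 < M -> a <= M -> 0 <= t <= 1 -> t * a <= x <= t * a + (M - a) ->
  `|x / M - t| <= (M - a) / M.
Proof.
move=> M_gt0 aM /andP[t_ge0 t_le1] /andP[lo up].
have -> : x / M - t = (x - t * M) / M by field; rewrite gt_eqF.
rewrite normrM (gtr0_norm (x := M^-1)) ?invr_gt0 // ler_pM2r ?invr_gt0 //.
have ta : t * a <= t * M by rewrite ler_wpM2l.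
have tMa : t * M - t * a <= M - a.
  by rewrite -mulrBr -[leRHS]mul1r ler_wpM2r // subr_ge0.
by rewrite ler_norml; apply/andP; split; lra.
Qed.

Lemma density_inflate_dist (F G H : graph) :
  gorder F = 3%N -> (3 <= gorder G)%N -> (0 < gorder H)%N ->
  `|density F (Inflate G H) - density F G| <= 18 / (gorder G)%:R.
Proof.
move=> F3 G3 H_gt0.
have IGH : gorder (Inflate G H) = (gorder G * gorder H)%N by rewrite /gorder card_prod.
rewrite !densityE ?F3 ?IGH //; last by rewrite (leq_trans G3) ?leq_pmulr.
have lo := copies_inflate_lower G H F; have up := copies_inflate_upper G H F.
have ah := card_transversals_le G H 3%N; rewrite card_transversals in ah.
have cC := card_copies_le F G.
have gap := bin3_mul_gap_le rat G3 H_gt0.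
rewrite F3 /gorder in lo up cC G3 H_gt0 gap *.
set n := #|V G| in lo up ah cC G3 gap *; set h := #|V H| in lo up ah gap H_gt0 *.
set x := #|copies F (Inflate G H)| in lo up *; set c := #|copies F G| in lo up cC *.
have M_gt0 : 0 < 'C(n * h, 3)%:R :> rat.
  by rewrite ltr0n bin_gt0 (leq_trans G3) ?leq_pmulr.
have C_gt0 : 0 < 'C(n, 3)%:R :> rat by rewrite ltr0n bin_gt0.
apply: le_trans (dist_divr_le (a := 'C(n, 3)%:R * h%:R ^+ 3) M_gt0 _ _ _) _.
- by rewrite -natrX -natrM ler_nat.
- by rewrite divr_ge0 ?ler0n //= ler_pdivrMr // mul1r ler_nat.
- rewrite mulrA mulfVK ?gt_eqF // -natrX -!natrM !ler_nat lo /=.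
  by rewrite -natrB // -natrD ler_nat.
- by rewrite ler_pdivrMr // mulrAC ler_pdivlMr ?ltr0n ?(leq_trans _ G3) // mulrC.
Qed.

Lemma converges_to_density_inflate (F H : graph) (G : nat -> graph) (t : rat) :
  gorder F = 3%N -> (0 < gorder H)%N ->
  (forall M : nat, exists N : nat, forall i, (N <= i)%N -> (M <= gorder (G i))%N) ->
  (forall i, (3 <= gorder (G i))%N -> density F (G i) = t) ->
  converges_to (fun i => density F (Inflate (G i) H)) t.
Proof.
move=> F3 H_gt0 G_grows G_t eps eps_gt0.
have [N G_big] := G_grows (maxn 3 (Num.bound (18 / eps))).
exists N => i /G_big; rewrite geq_max => /andP[G3 G_bound].
rewrite -(G_t i G3); apply: le_lt_trans (density_inflate_dist F3 G3 H_gt0) _.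
rewrite ltr_pdivrMr ?ltr0n ?(leq_trans _ G3) // mulrC -ltr_pdivrMr //.
by rewrite (lt_le_trans (archi_boundP _)) ?ler_nat // divr_ge0 ?ltW.
Qed.

Local Close Scope ring_scope.

Theorem mainTheorem18 (G : nat -> graph) (H : graph) :
  (forall i, three_symmetric (G i)) ->
  (forall M : nat, exists N : nat, forall i, (N <= i)%N -> (M <= gorder (G i))%N) ->
  three_symmetric H ->
  (0 < gorder H)%N ->
  [/\ converges_to (fun i => density K3 (Inflate (G i) H)) (1/8)%R,
      converges_to (fun i => density P3 (Inflate (G i) H)) (3/8)%R,
      converges_to (fun i => density K2K1 (Inflate (G i) H)) (3/8)%R &
      converges_to (fun i => density E3 (Inflate (G i) H)) (1/8)%R].
Proof.
move=> G_sym G_grows _ H_gt0.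
by split; (apply: converges_to_density_inflate => //; [exact: card_ord | move=> i /G_sym[]]).
Qed.
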